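(* Let $X$ be a non-empty presheaf of sets on $\mathscr{V}_f$ which is finite of degree $d$. Then (1) $|X(V)|<\infty$ for every finite-dimensional $V$; (2) $\gamma_X(t)=O(t^d)$.
   Context: $p$ prime, $\mathbb{F}=\mathbb{F}_p$, $\mathscr{V}_f$ finite-dimensional $\mathbb{F}$-vector spaces. $\mathscr{F}$ is the abelian category of functors $\mathscr{V}_f^{\mathrm{op}}\to$ ($\mathbb{F}$-vector spaces); $\mathbb{F}[X]$ is sectionwise linearization and $q_n$ is the left adjoint of the inclusion of functors of Eilenberg–MacLane polynomial degree $\le n$. A presheaf $X$ is finite if it embeds in a functor of $\mathscr{F}$ with a finite composition series; its degree is the least $n$ such that $X\to\mathbb{F}[X]\to q_n\mathbb{F}[X]$ is a monomorphism (equivalently the least polynomial degree of a finite functor into which $X$ embeds). The growth function is $\gamma_X(t)=\log_p|X(\mathbb{F}^t)|$ for $t\in\mathbb{N}$. *)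

From HB Require Import structures.
From mathcomp Require Import all_boot all_order all_algebra.
From Stdlib Require Rdefinitions Raxioms Rpow_def Rpower.
Set Implicit Arguments. Unset Strict Implicit. Unset Printing Implicit Defensive.
Import GRing.Theory.
Local Open Scope ring_scope.

(* The category V_f of finite-dimensional F_p-vector spaces is modelled by its
   skeleton: the object t : nat stands for F_p^t (row vectors), and a morphism
   F_p^n -> F_p^m is a matrix A : 'M['F_p]_(n,m) acting by v |-> v *m A.
   Composition "first A then B" is A *m B. *)

Record presheaf (p : nat) := Presheaf {
  ps_obj :> nat -> Type;
  ps_map : forall n m, 'M['F_p]_(n, m) -> ps_obj m -> ps_obj n;
  ps_id : forall n (x : ps_obj n), ps_map (1%:M : 'M_n) x = x;
  ps_comp : forall n m k (A : 'M['F_p]_(n, m)) (B : 'M['F_p]_(m, k)) (x : ps_obj k),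
      ps_map (A *m B) x = ps_map A (ps_map B x)
}.

Record vfunctor (p : nat) := VFunctor {
  vf_obj :> nat -> lmodType 'F_p;
  vf_map : forall n m, 'M['F_p]_(n, m) -> vf_obj m -> vf_obj n;
  vf_linear : forall n m (A : 'M['F_p]_(n, m)) (a : 'F_p) (x y : vf_obj m),
      vf_map A (a *: x + y) = a *: vf_map A x + vf_map A y;
  vf_id : forall n (x : vf_obj n), vf_map (1%:M : 'M_n) x = x;
  vf_comp : forall n m k (A : 'M['F_p]_(n, m)) (B : 'M['F_p]_(m, k)) (x : vf_obj k),
      vf_map (A *m B) x = vf_map A (vf_map B x)
}.

Definition is_subfunctor (p : nat) (F : vfunctor p) (S : forall n, F n -> Prop) :=
  [/\ forall n, S n 0,
      forall n (a : 'F_p) (x y : F n), S n x -> S n y -> S n (a *: x + y)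
    & forall n m (A : 'M['F_p]_(n, m)) (x : F m), S m x -> S n (vf_map A x)].

Definition subf_le (p : nat) (F : vfunctor p) (S T : forall n, F n -> Prop) :=
  forall n (x : F n), S n x -> T n x.

(* F has a finite composition series 0 = S_0 < S_1 < ... < S_k = F whose
   successive quotients S_{i+1}/S_i are simple, i.e. S_i is strictly contained
   in S_{i+1} and there is no subfunctor strictly in between. *)
Definition finite_functor (p : nat) (F : vfunctor p) :=
  exists (k : nat) (S : nat -> forall n, F n -> Prop),
    [/\ forall i, (i <= k)%N -> is_subfunctor (S i),
        forall n (x : F n), S 0%N n x <-> x = 0,
        forall n (x : F n), S k n x
      & forall i, (i < k)%N ->
          [/\ subf_le (S i) (S i.+1), ~ subf_le (S i.+1) (S i)
            & forall T, is_subfunctor T -> subf_le (S i) T -> subf_le T (S i.+1) ->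
                subf_le T (S i) \/ subf_le (S i.+1) T]].

(* Eilenberg--MacLane polynomial degree <= d: the (d+1)-st cross effect
   vanishes.  For V = V_1 (+) ... (+) V_(d+1) (a decomposition of F_p^N into
   coordinate blocks given by a colouring c : 'I_N -> 'I_(d+1)), and
   S a set of blocks, e_S is the projection of V onto (+)_{i in S} V_i; the
   cross effect cr_(d+1) F(V_1,...,V_(d+1)) is the image of the idempotent
   sum_S (-1)^(d+1-|S|) F(e_S) on F(V). *)
Definition block_proj (p N d : nat) (c : 'I_N -> 'I_d.+1) (S : {set 'I_d.+1})
  : 'M['F_p]_N :=
  diag_mx (\row_j (if c j \in S then 1 else 0)).

Definition poly_deg_le (p : nat) (F : vfunctor p) (d : nat) :=
  forall (N : nat) (c : 'I_N -> 'I_d.+1) (x : F N),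
    \sum_(S : {set 'I_d.+1}) ((-1) ^+ (d.+1 - #|S|) : 'F_p) *: vf_map (block_proj p c S) x = 0.

Definition embeds (p : nat) (X : presheaf p) (F : vfunctor p) :=
  exists eta : forall n, X n -> F n,
    (forall n, injective (eta n)) /\
    (forall n m (A : 'M['F_p]_(n, m)) (x : X m), eta n (ps_map A x) = vf_map A (eta m x)).

Definition finite_presheaf (p : nat) (X : presheaf p) :=
  exists F : vfunctor p, finite_functor F /\ embeds X F.

Definition presheaf_degree (p : nat) (X : presheaf p) (d : nat) :=
  (exists F : vfunctor p, [/\ finite_functor F, poly_deg_le F d & embeds X F]) /\
  (forall (n : nat) (F : vfunctor p),
      finite_functor F -> poly_deg_le F n -> embeds X F -> (d <= n)%N).

Definition nonempty_presheaf (p : nat) (X : presheaf p) := exists t, inhabited (X t).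

Definition has_card (T : Type) (n : nat) := exists f : T -> 'I_n, bijective f.

(* gamma_X(t) = log_p |X(F^t)|, given the cardinality |X(F^t)| = n. *)
Definition gamma_val (p n : nat) : Rdefinitions.R :=
  Rdefinitions.Rdiv (Rpower.ln (Raxioms.INR n)) (Rpower.ln (Raxioms.INR p)).

From Stdlib Require Rdefinitions Raxioms Rpow_def Rpower.
From Stdlib Require Import ClassicalEpsilon Reals.
From mathcomp Require Import all_boot all_order all_algebra.

(* A finite functor F has finite-dimensional values: along a composition
   series each simple quotient S_(i+1)/S_i is generated by one element x0, and
   the part of the subfunctor generated by x0 at F_p^n is spanned by the
   finitely many F(A) x0.  If moreover F has polynomial degree <= d, the
   vanishing (d+1)-st cross effect writes F(pi_J), for a coordinate projection
   pi_J of F_p^t with |J| > d, as a combination of the F(pi_J') with J' a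
   proper subset of J.  Hence F(F_p^t) is spanned by the images of F(F_p^d)
   under the (t+1)^d maps induced by coordinate selections F_p^t -> F_p^d, so
   dim F(F_p^t) <= (t+1)^d dim F(F_p^d).  As X embeds in such an F,
   |X(F_p^t)| <= p ^ dim F(F_p^t), and gamma_X(t) = O(t^d). *)

Set Implicit Arguments. Unset Strict Implicit. Unset Printing Implicit Defensive.
Import GRing.Theory.
Local Open Scope ring_scope.

Section Span.
Variables (K : pzRingType) (V : lmodType K).

Inductive inspan (L : seq V) : V -> Prop :=
| inspan0 : inspan L 0
| inspan_mem x : x \in L -> inspan L x
| inspan_lin a x y : inspan L x -> inspan L y -> inspan L (a *: x + y).

Lemma inspanD L x y : inspan L x -> inspan L y -> inspan L (x + y).
Proof. by move=> hx hy; rewrite -[x]scale1r; apply: inspan_lin. Qed.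

Lemma inspanZ L a x : inspan L x -> inspan L (a *: x).
Proof. by move=> hx; rewrite -[_ *: _]addr0; apply: inspan_lin => //; apply: inspan0. Qed.

Lemma inspanN L x : inspan L x -> inspan L (- x).
Proof. by move=> hx; rewrite -scaleN1r; apply: inspanZ. Qed.

Lemma inspan_sub L L' x : {subset L <= L'} -> inspan L x -> inspan L' x.
Proof.
move=> sLL'; elim=> [|y /sLL'|a y z _ hy _ hz]; first exact: inspan0.
  exact: inspan_mem.
exact: inspan_lin.
Qed.

Lemma inspan_sum (I : finType) (P : pred I) L (F : I -> V) :
  (forall i, P i -> inspan L (F i)) -> inspan L (\sum_(i | P i) F i).
Proof.
move=> h; elim/big_rec: _ => [|i x Pi hx]; first exact: inspan0.
exact: inspanD (h i Pi) hx.
Qed.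

Lemma inspan_coef L x : inspan L x ->
  exists c : {ffun 'I_(size L) -> K}, x = \sum_i c i *: L`_i.
Proof.
elim=> [|y yL|a y z _ [c1 ->] _ [c2 ->]].
- by exists [ffun=> 0]; rewrite big1 // => i _; rewrite ffunE scale0r.
- have yLi : (index y L < size L)%N by rewrite index_mem.
  exists [ffun i : 'I_(size L) => if i == Ordinal yLi then 1 else 0].
  rewrite (bigD1 (Ordinal yLi)) //= ffunE eqxx scale1r nth_index // big1 ?addr0 //.
  by move=> i /negPf ne; rewrite ffunE ne scale0r.
- exists [ffun i => a * c1 i + c2 i].
  rewrite scaler_sumr -big_split /=; apply: eq_bigr => i _.
  by rewrite ffunE scalerDl scalerA.
Qed.

Lemma inj_coef (T : Type) (L : seq V) (g : T -> V) :
  injective g -> (forall x, inspan L x) ->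
  exists h : T -> {ffun 'I_(size L) -> K}, injective h.
Proof.
move=> g_inj L_span.
pose coef x := constructive_indefinite_description _ (inspan_coef (L_span (g x))).
exists (fun x => proj1_sig (coef x)) => x y eq_coef.
by apply: g_inj; rewrite (proj2_sig (coef x)) (proj2_sig (coef y)) eq_coef.
Qed.

End Span.

Lemma inj_has_card (T : Type) (U : finType) (g : T -> U) :
  injective g -> exists n, has_card T n.
Proof.
move=> g_inj.
pose A := [set u : U | if excluded_middle_informative (exists x, g x = u) then true else false].
have gA x : g x \in A.
  by rewrite inE; case: excluded_middle_informative => // [[]]; exists x.
have preim (j : 'I_#|A|) : exists x, g x = enum_val j.
  by have := enum_valP j; rewrite inE; case: excluded_middle_informative.
exists #|A|, (fun x => enum_rank_in (gA x) (g x)).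
exists (fun j => proj1_sig (constructive_indefinite_description _ (preim j))).
- move=> x /=; case: constructive_indefinite_description => y /= gy.
  by apply: g_inj; rewrite gy enum_rankK_in.
- move=> j /=; case: constructive_indefinite_description => y /= gy.
  by apply: (can_inj (enum_valK_in (gA y))); rewrite enum_rankK_in ?gA // gy.
Qed.

Lemma has_card_leq (T : Type) (U : finType) (g : T -> U) n :
  injective g -> has_card T n -> (n <= #|U|)%N.
Proof.
move=> g_inj [f [f' _ ff']].
have inj : injective (fun j : 'I_n => g (f' j)).
  by move=> i j /g_inj /(congr1 f); rewrite !ff'.
by rewrite -[n]card_ord; apply: leq_card inj.
Qed.

Section FunctorSpan.
Variables (p : nat) (F : vfunctor p).

Lemma vf_map0 n m (A : 'M['F_p]_(n, m)) : vf_map A (0 : F m) = 0.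
Proof.
have := vf_linear (v := F) A (-1) 0 0.
by rewrite scaleN1r oppr0 addr0 scaleN1r addNr.
Qed.

Lemma vf_mapD n m (A : 'M['F_p]_(n, m)) (x y : F m) :
  vf_map A (x + y) = vf_map A x + vf_map A y.
Proof. by have := vf_linear (v := F) A 1 x y; rewrite !scale1r. Qed.

Lemma inspan_map n m (A : 'M['F_p]_(n, m)) (L : seq (F m)) x :
  inspan L x -> inspan (map (vf_map A) L) (vf_map A x).
Proof.
elim=> [|y yL|a y z _ hy _ hz].
- by rewrite vf_map0; apply: inspan0.
- exact/inspan_mem/map_f.
- by rewrite vf_linear; apply: inspan_lin.
Qed.

Lemma subfunctor_inspan (S : forall n, F n -> Prop) n (L : seq (F n)) x :
  is_subfunctor S -> (forall y, y \in L -> S n y) -> inspan L x -> S n x.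
Proof.
case=> S0 Slin _ SL; elim=> [|y /SL //|a y z _ hy _ hz]; first exact: S0.
exact: Slin.
Qed.

Definition finitely_spanned (S : forall n, F n -> Prop) :=
  forall n, exists L : seq (F n), forall x, S n x -> inspan L x.

Section AddOrbit.
Variables (S : forall n, F n -> Prop) (m : nat) (x0 : F m).
Arguments S : clear implicits.

Definition orbit_seq q : seq (F q) := [seq vf_map A x0 | A <- enum {: 'M['F_p]_(q, m)}].

Lemma mem_orbit_seq q (A : 'M['F_p]_(q, m)) : vf_map A x0 \in orbit_seq q.
Proof. by apply: map_f; rewrite mem_enum. Qed.

(* [S] plus the subfunctor generated by [x0]. *)
Definition add_orbit q (y : F q) :=
  exists s z, [/\ S q s, inspan (orbit_seq q) z & y = s + z].

Hypothesis S_sub : is_subfunctor S.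

Lemma add_orbit_subfunctor : is_subfunctor add_orbit.
Proof.
case: S_sub => S0 Slin Smap; split.
- by move=> n; exists 0, 0; split; [exact: S0 | exact: inspan0 | rewrite addr0].
- move=> n a _ _ [s [z [hs hz ->]]] [s' [z' [hs' hz' ->]]].
  exists (a *: s + s'), (a *: z + z'); split; [exact: Slin | exact: inspan_lin |].
  by rewrite scalerDr addrACA.
- move=> n q A _ [s [z [hs hz ->]]]; exists (vf_map A s), (vf_map A z).
  split; [exact: Smap | | by rewrite vf_mapD].
  apply: inspan_sub (inspan_map A hz) => _ /mapP [_ /mapP [B _ ->] ->].
  by rewrite -vf_comp mem_orbit_seq.
Qed.

Lemma le_add_orbit : subf_le S add_orbit.
Proof. by move=> n s hs; exists s, 0; split=> //; [exact: inspan0 | rewrite addr0]. Qed.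

Lemma add_orbit_le (S' : forall n, F n -> Prop) :
  is_subfunctor S' -> subf_le S S' -> S' m x0 -> subf_le add_orbit S'.
Proof.
move=> S'_sub le_SS' S'x0 n _ [s [z [hs hz ->]]].
have [_ S'lin S'map] := S'_sub.
rewrite -[s]scale1r; apply: S'lin; first exact: le_SS'.
by apply: subfunctor_inspan S'_sub _ hz => _ /mapP [B _ ->]; apply: S'map.
Qed.

Lemma add_orbit_x0 : add_orbit x0.
Proof.
exists 0, x0; split; [by case: S_sub | | by rewrite add0r].
by apply: inspan_mem; rewrite -{1}[x0](vf_id (v := F)) mem_orbit_seq.
Qed.

Lemma finitely_spanned_add_orbit :
  finitely_spanned S -> finitely_spanned add_orbit.
Proof.
move=> S_span n; have [L L_span] := S_span n.
exists (L ++ orbit_seq n) => _ [s [z [hs hz ->]]]; apply: inspanD.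
  by apply: inspan_sub (L_span s hs) => w wL; rewrite mem_cat wL.
by apply: inspan_sub hz => w wL; rewrite mem_cat wL orbT.
Qed.

End AddOrbit.

(* A simple extension [S < S'] is generated over [S] by any element of [S'] outside [S]. *)
Lemma finitely_spanned_simple_ext (S S' : forall n, F n -> Prop) :
  is_subfunctor S -> is_subfunctor S' -> subf_le S S' -> ~ subf_le S' S ->
  (forall T, is_subfunctor T -> subf_le S T -> subf_le T S' ->
     subf_le T S \/ subf_le S' T) ->
  finitely_spanned S -> finitely_spanned S'.
Proof.
move=> S_sub S'_sub le_SS' not_le_S'S simple S_span.
have [m [x0 [S'x0 not_Sx0]]] : exists m (x0 : F m), S' m x0 /\ ~ S m x0.
  apply: NNPP => none; apply: not_le_S'S => m x S'x.
  by apply: NNPP => not_Sx; apply: none; exists m, x.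
have T_sub := add_orbit_subfunctor x0 S_sub.
have [le_TS|le_S'T] := simple _ T_sub (le_add_orbit x0) (add_orbit_le S'_sub le_SS' S'x0).
  by case: not_Sx0; apply/le_TS/add_orbit_x0.
move=> n; have [L L_span] := finitely_spanned_add_orbit x0 S_span n.
by exists L => x /le_S'T /L_span.
Qed.

Lemma finite_functor_span : finite_functor F ->
  forall n, exists L : seq (F n), forall x, inspan L x.
Proof.
case=> k [S [S_sub S0 Sk S_simple]].
suff S_span i : (i <= k)%N -> finitely_spanned (S i).
  by move=> n; have [L L_span] := S_span k (leqnn k) n; exists L => x; apply/L_span/Sk.
elim: i => [_ n|i IHi lt_ik]; first by exists [::] => x /S0 ->; apply: inspan0.
have [le_i not_le simple] := S_simple i lt_ik.
exact: finitely_spanned_simple_ext (S_sub i (ltnW lt_ik)) (S_sub i.+1 lt_ik)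
  le_i not_le simple (IHi (ltnW lt_ik)).
Qed.

End FunctorSpan.

Section CoordinateMatrices.
Variable p : nat.

Definition coord_proj t (J : {set 'I_t}) : 'M['F_p]_t :=
  diag_mx (\row_j (if j \in J then 1 else 0)).

Lemma coord_projT t : coord_proj [set: 'I_t] = 1%:M.
Proof.
rewrite /coord_proj -diag_const_mx; congr diag_mx; apply/matrixP => i j.
by rewrite !mxE in_setT.
Qed.

Lemma coord_projM t (J K : {set 'I_t}) :
  coord_proj J *m coord_proj K = coord_proj (J :&: K).
Proof.
rewrite /coord_proj mulmx_diag; congr diag_mx; apply/matrixP => i j.
by rewrite !mxE inE; case: (j \in J); case: (j \in K); rewrite ?mulr1 ?mulr0.
Qed.

Lemma block_proj_coord N d (c : 'I_N -> 'I_d.+1) (S : {set 'I_d.+1}) :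
  block_proj p c S = coord_proj [set j | c j \in S].
Proof.
by rewrite /block_proj /coord_proj; congr diag_mx; apply/matrixP => i j; rewrite !mxE inE.
Qed.

Definition select_mx t d (f : {ffun 'I_d -> option 'I_t}) : 'M['F_p]_(t, d) :=
  \matrix_(i, k) (if f k == Some i then 1 else 0).

Definition enum_select t d (J : {set 'I_t}) : {ffun 'I_d -> option 'I_t} :=
  [ffun k : 'I_d => nth None (map Some (enum J)) k].

Lemma enum_selectE t d (J : {set 'I_t}) k i :
  (enum_select d J k == Some i) = (i \in J) && (val k == index i (enum J)).
Proof.
rewrite ffunE; case: (ltnP k (size (enum J))) => hk.
  rewrite (nth_map i) // inj_eq; last by move=> ? ? [].
  apply/eqP/andP => [<-|[iJ /eqP ->]]; last by rewrite nth_index // mem_enum.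
  by rewrite index_uniq ?enum_uniq // -mem_enum mem_nth.
rewrite nth_default ?size_map //; symmetry; apply/andP => -[iJ /eqP ek].
by move: hk; rewrite ek leqNgt index_mem mem_enum iJ.
Qed.

Lemma coord_proj_factor t d (J : {set 'I_t}) : (#|J| <= d)%N ->
  select_mx (enum_select d J) *m (select_mx (enum_select d J))^T = coord_proj J.
Proof.
move=> le_Jd; apply/matrixP => i i'; rewrite !mxE.
under eq_bigr => k _ do rewrite !mxE.
case iJ: (i \in J); last by rewrite big1 ?mul0rn // => k _; rewrite enum_selectE iJ mul0r.
have ki : (index i (enum J) < d)%N.
  by apply: leq_trans le_Jd; rewrite cardE index_mem mem_enum.
have sel_ki : enum_select d J (Ordinal ki) = Some i.
  by apply/eqP; rewrite enum_selectE iJ eqxx.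
rewrite (bigD1 (Ordinal ki)) //= big1 ?addr0.
  by rewrite sel_ki eqxx mul1r (inj_eq Some_inj); case: (i == i').
move=> k ne_k; rewrite enum_selectE iJ /=.
by case: eqP => [ek|_]; [case/eqP: ne_k; apply: val_inj | rewrite mul0r].
Qed.

End CoordinateMatrices.

Section PolynomialSpan.
Variables (p : nat) (F : vfunctor p) (d : nat).
Hypothesis F_poly : poly_deg_le F d.

(* The vanishing (d+1)-st cross effect, applied to [F(pi_J) z]. *)
Lemma coord_proj_cross_effect t (c : 'I_t -> 'I_d.+1) (J : {set 'I_t}) (z : F t) :
  vf_map (coord_proj p J) z =
  - \sum_(S | S != setT) ((-1) ^+ (d.+1 - #|S|) : 'F_p) *:
      vf_map (coord_proj p ([set j | c j \in S] :&: J)) z.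
Proof.
have := F_poly c (vf_map (coord_proj p J) z).
rewrite (bigD1 setT) //= cardsT card_ord subnn expr0 scale1r block_proj_coord.
have -> : [set j | c j \in [set: 'I_d.+1]] = setT by apply/setP => j; rewrite !inE.
rewrite coord_projT vf_id => cross.
apply/eqP; rewrite -addr_eq0; apply/eqP; rewrite -[RHS]cross; congr (_ + _).
apply: eq_bigr => S _.
by rewrite block_proj_coord -vf_comp coord_projM.
Qed.

Definition enum_colour t (J : {set 'I_t}) (j : 'I_t) : 'I_d.+1 :=
  inord (minn (index j (enum J)) d).

Lemma proper_enum_colour t (J : {set 'I_t}) (S : {set 'I_d.+1}) :
  (d < #|J|)%N -> S != setT -> [set j | enum_colour J j \in S] :&: J \proper J.
Proof.
move=> lt_dJ ne_ST; apply/properP; split; first exact: subsetIr.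
have [b nSb] : exists b, b \notin S.
  apply: NNPP => all_S; case/eqP: ne_ST; apply/setP => b; rewrite inE.
  by apply: negbNE; apply/negP => nSb; apply: all_S; exists b.
have b_lt : (b < size (enum J))%N by rewrite -cardE; apply: leq_trans lt_dJ.
have j0 : 'I_t by case: (enum J) b_lt => [|j]; [| exists j].
exists (nth j0 (enum J) b); first by rewrite -mem_enum mem_nth.
rewrite !inE negb_and /enum_colour index_uniq ?enum_uniq //.
by rewrite (minn_idPl (ltnSE (ltn_ord b))) inord_val (negPf nSb).
Qed.

Variable Ld : seq (F d).
Hypothesis Ld_span : forall x, inspan Ld x.

Definition deg_span_seq t : seq (F t) :=
  [seq vf_map (select_mx p f) y | f <- enum {: {ffun 'I_d -> option 'I_t}}, y <- Ld].

Lemma size_deg_span_seq t : size (deg_span_seq t) = (t.+1 ^ d * size Ld)%N.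
Proof. by rewrite size_allpairs -cardE card_ffun card_option !card_ord. Qed.

Lemma inspan_coord_proj t (J : {set 'I_t}) (z : F t) :
  inspan (deg_span_seq t) (vf_map (coord_proj p J) z).
Proof.
elim: {J}_.+1 {-2}J (ltnSn #|J|) => // n IHn J lt_Jn.
have [le_Jd|lt_dJ] := leqP #|J| d.
  rewrite -(coord_proj_factor p le_Jd) vf_comp.
  apply: inspan_sub (inspan_map _ (Ld_span _)) => _ /mapP [y yL ->].
  by apply: allpairs_f; rewrite ?mem_enum.
rewrite (coord_proj_cross_effect (enum_colour J)).
apply/inspanN/inspan_sum => S ne_ST; apply/inspanZ/IHn.
exact: leq_trans (proper_card (proper_enum_colour lt_dJ ne_ST)) _.
Qed.

Lemma inspan_deg_span_seq t (x : F t) : inspan (deg_span_seq t) x.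
Proof. by have := inspan_coord_proj [set: 'I_t] x; rewrite coord_projT vf_id. Qed.

End PolynomialSpan.

Lemma poly_finite_span (p : nat) (F : vfunctor p) (d : nat) :
  finite_functor F -> poly_deg_le F d ->
  exists k, forall t, exists L : seq (F t),
    size L = (t.+1 ^ d * k)%N /\ forall x, inspan L x.
Proof.
move=> F_fin F_poly; have [Ld Ld_span] := finite_functor_span F_fin d.
exists (size Ld) => t; exists (deg_span_seq Ld t).
by rewrite size_deg_span_seq; split=> // x; apply: inspan_deg_span_seq.
Qed.

Section SpanCard.
Variables (p : nat) (V : lmodType 'F_p) (T : Type) (g : T -> V) (L : seq V).
Hypotheses (g_inj : injective g) (L_span : forall x, inspan L x).

Lemma inspan_has_card : exists n, has_card T n.
Proof. by have [h h_inj] := inj_coef g_inj L_span; apply: inj_has_card h_inj. Qed.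

Lemma has_card_le_span n : prime p -> has_card T n -> (n <= p ^ size L)%N.
Proof.
move=> p_pr T_n; have [h h_inj] := inj_coef g_inj L_span.
by have := has_card_leq h_inj T_n; rewrite card_ffun card_Fp // card_ord.
Qed.

End SpanCard.

Lemma presheaf_inhabited (p : nat) (X : presheaf p) :
  nonempty_presheaf X -> forall t, inhabited (X t).
Proof. by case=> t0 [x0] t; exists; apply: (ps_map (0 : 'M_(t, t0)) x0). Qed.

Lemma Nat_powE a b : Nat.pow a b = (a ^ b)%N.
Proof. by elim: b => // b IHb; rewrite expnS -IHb. Qed.

Lemma gamma_val_le (p c N : nat) :
  (1 < p)%N -> (0 < c)%N -> (c <= p ^ N)%N -> Rle (gamma_val p c) (INR N).
Proof.
move=> p_gt1 c_gt0 c_le.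
have ln_p_gt0 : Rlt 0 (ln (INR p)).
  rewrite -ln_1; apply: ln_increasing; first exact: Rlt_0_1.
  by apply: (lt_INR 1); apply/ltP.
have ln_c_le : Rle (ln (INR c)) (Rmult (INR N) (ln (INR p))).
  rewrite -ln_pow; last by apply: lt_0_INR; apply/ltP; apply: ltn_trans p_gt1.
  rewrite -pow_INR Nat_powE.
  have [lt_c|->] := Rle_lt_or_eq _ _ (le_INR _ _ (elimT leP c_le)); last exact: Rle_refl.
  by apply/Rlt_le/ln_increasing => //; apply: lt_0_INR; apply/ltP.
rewrite /gamma_val /Rdiv; apply: (Rmult_le_reg_r (ln (INR p))) => //.
by rewrite Rmult_assoc Rinv_l ?Rmult_1_r //; apply: Rgt_not_eq.
Qed.

Theorem proposition6p4 (p : nat) (X : presheaf p) (d : nat) :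
  prime p ->
  nonempty_presheaf X ->
  finite_presheaf X ->
  presheaf_degree X d ->
  (forall t : nat, exists n : nat, has_card (X t) n) /\
  (forall card : nat -> nat, (forall t, has_card (X t) (card t)) ->
     exists (C : Rdefinitions.R) (t0 : nat), forall t : nat, (t0 <= t)%N ->
       Rdefinitions.Rle (gamma_val p (card t))
         (Rdefinitions.Rmult C (Rpow_def.pow (Raxioms.INR t) d))).
Proof.
move=> p_pr X_ne _ [[F [F_fin F_poly [eta [eta_inj _]]]] _].
have [k F_span] := poly_finite_span F_fin F_poly.
split=> [t | card X_card].
  by have [L [_ L_span]] := F_span t; apply: inspan_has_card (eta_inj t) L_span.
exists (INR (2 ^ d * k)), 1%N => t t_gt0.
have [L [size_L L_span]] := F_span t.
have card_gt0 : (0 < card t)%N.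
  have [x] := presheaf_inhabited X_ne t; have [f _] := X_card t.
  exact: leq_ltn_trans (leq0n _) (ltn_ord (f x)).
have card_le := has_card_le_span (eta_inj t) L_span p_pr (X_card t).
have size_le : (size L <= 2 ^ d * k * t ^ d)%N.
  rewrite size_L mulnAC -expnMn mul2n leq_mul2r; apply/orP; right.
  have [->|d_gt0] := posnP d; first by rewrite !expn0.
  by rewrite leq_exp2r // -addnn -addn1 leq_add2l.
apply: Rle_trans (gamma_val_le (prime_gt1 p_pr) card_gt0 card_le) _.
by rewrite -pow_INR -mult_INR Nat_powE; apply/le_INR/leP.
Qed.
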